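(* Assume (i) $b,f,g$ are bounded and uniformly continuous in all variables, and (ii) $\mathbb H(\theta)\neq\emptyset$ for all $\theta\in\mathbb X$ and $\theta\mapsto\mathbb H(\theta)$ is continuous with respect to the Hausdorff distance $d$. Then for any $\eta\in\mathbb L^2(\mathbb F;\mathbb R^N)$, $Z\in\mathbb L^2(\mathbb F;\mathbb R^{dN})$ and $\varepsilon>0$, there exist $\alpha^\varepsilon\in\mathcal A$ and $Z^\varepsilon\in\mathbb L^2(\mathbb F;\mathbb R^{dN})$ such that $\alpha^\varepsilon_t\in\mathcal E_\varepsilon(t,X_t,Z^\varepsilon_t)$ (for all $t,\omega$), $\mathbb E[\int_0^T|Z^\varepsilon_t-Z_t|^2dt]\le\varepsilon$, and, with $\Theta_t:=(t,X_t,Z_t)$, $$\mathbb E\Big[\int_0^T\Big|\,|\eta_t-h(\Theta_t,\alpha^\varepsilon_t)|-d\big(\eta_t,\mathbb H(\Theta_t)\big)\Big|^2dt\Big]\le\varepsilon.$$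
   Context: Fix integers $d,N\ge 1$ and $T>0$. Let $(\Omega,\mathcal F,\mathbb P)$ carry a standard $d$-dimensional Brownian motion $B$, $\mathbb F=\mathbb F^B$, and $X:=B$. For $i=1,\dots,N$, $A_i$ is a domain in some Euclidean space, $A:=A_1\times\cdots\times A_N$, $\mathcal A_i$ is the set of $\mathbb F$-progressively measurable $A_i$-valued processes, $\mathcal A:=\mathcal A_1\times\cdots\times\mathcal A_N$; $(a^{-i},\tilde a_i)$ denotes $a$ with $i$-th component replaced by $\tilde a_i$. Data: $b:[0,T]\times\mathbb R^d\times A\to\mathbb R^d$, $f:[0,T]\times\mathbb R^d\times A\to\mathbb R^N$, $g:\mathbb R^d\to\mathbb R^N$. Let $\mathbb X:=[0,T]\times\mathbb R^d\times\mathbb R^{dN}$, $\theta=(t,x,z)$, $z=(z^1,\dots,z^N)$, $z^i\in\mathbb R^d$, $\theta^i:=(t,x,z^i)$; $h_i(t,x,z^i,a):=f_i(t,x,a)+b(t,x,a)\cdot z^i$, $h(\theta,a):=(h_1(\theta^1,a),\dots,h_N(\theta^N,a))$. For $\varepsilon>0$, $\mathcal E_\varepsilon(\theta)$ is the set of $a\in A$ with $h_i(\theta^i,a)\ge h_i(\theta^i,(a^{-i},\tilde a_i))-\varepsilon$ for all $i$, $\tilde a_i\in A_i$; $\mathbb H_\varepsilon(\theta):=\{y\in\mathbb R^N:|y-h(\theta,a)|<\varepsilon$ for some $a\in\mathcal E_\varepsilon(\theta)\}$, $\mathbb H(\theta):=\bigcap_{\varepsilon>0}\mathbb H_\varepsilon(\theta)$.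 Hausdorff distance: $d(\mathbb H_1,\mathbb H_2)=[\sup_{y_1\in\mathbb H_1}d(y_1,\mathbb H_2)]\vee[\sup_{y_2\in\mathbb H_2}d(y_2,\mathbb H_1)]$, $d(y,\mathbb H'):=\inf_{y'\in\mathbb H'}|y-y'|$. $\mathbb L^2(\mathbb F;\mathbb R^m)$ denotes $\mathbb F$-progressively measurable $\mathbb R^m$-valued processes $\xi$ with $\mathbb E\int_0^T|\xi_t|^2dt<\infty$. *)

From HB Require Import structures.
From mathcomp Require Import all_boot all_order all_algebra.
From mathcomp Require Import all_classical all_reals all_analysis.
Set Implicit Arguments.
Unset Strict Implicit.
Unset Printing Implicit Defensive.
Import Order.TTheory GRing.Theory Num.Theory.
Import numFieldNormedType.Exports.
Local Open Scope classical_set_scope.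
Local Open Scope ring_scope.

(* Euclidean (Frobenius) norm; on 'rV_n = 'M_(1,n) this is the Euclidean norm
   of R^n, on 'M_(N,d) it is the Euclidean norm of R^(dN). *)
Definition enorm {R : realType} {p q : nat} (M : 'M[R]_(p, q)) : R :=
  Num.sqrt (\sum_(i < p) \sum_(j < q) M i j ^+ 2).

Definition dotp {R : realType} {n : nat} (u v : 'rV[R]_n) : R :=
  \sum_(k < n) u 0 k * v 0 k.

Definition dist_pt {R : realType} {n : nat} (y : 'rV[R]_n) (H : set 'rV[R]_n) : R :=
  inf [set enorm (y - y') | y' in H].

Definition hausdorff {R : realType} {n : nat} (H1 H2 : set 'rV[R]_n) : \bar R :=
  Order.max (ereal_sup [set (dist_pt y1 H2)%:E | y1 in H1])
            (ereal_sup [set (dist_pt y2 H1)%:E | y2 in H2]).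

Definition Act (R : realType) (N : nat) (m : 'I_N -> nat) : Type :=
  forall i : 'I_N, 'rV[R]_(m i).

Definition upd {R : realType} {N : nat} {m : 'I_N -> nat}
  (a : Act R m) (i : 'I_N) (ai : 'rV[R]_(m i)) : Act R m :=
  fun j => match i =P j with
           | ReflectT e => eq_rect i (fun k => 'rV[R]_(m k)) ai j e
           | ReflectF _ => a j
           end.
Arguments upd {R N m} a i ai _.

Definition inA {R : realType} {N : nat} {m : 'I_N -> nat}
  (A : forall i : 'I_N, set 'rV[R]_(m i)) (a : Act R m) : Prop :=
  forall i, A i (a i).

Definition is_domain {R : realType} {k : nat} (D : set 'rV[R]_k) : Prop :=
  D !=set0 /\ open D /\ connected D.

Definition ham_i {R : realType} {d N : nat} {m : 'I_N -> nat}
  (b : R -> 'rV[R]_d -> Act R m -> 'rV[R]_d)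
  (f : R -> 'rV[R]_d -> Act R m -> 'rV[R]_N)
  (i : 'I_N) (t : R) (x : 'rV[R]_d) (z : 'M[R]_(N, d)) (a : Act R m) : R :=
  f t x a 0 i + dotp (b t x a) (row i z).

Definition ham {R : realType} {d N : nat} {m : 'I_N -> nat}
  (b : R -> 'rV[R]_d -> Act R m -> 'rV[R]_d)
  (f : R -> 'rV[R]_d -> Act R m -> 'rV[R]_N)
  (t : R) (x : 'rV[R]_d) (z : 'M[R]_(N, d)) (a : Act R m) : 'rV[R]_N :=
  \row_(i < N) ham_i b f i t x z a.

Definition Eeps {R : realType} {d N : nat} {m : 'I_N -> nat}
  (A : forall i : 'I_N, set 'rV[R]_(m i))
  (b : R -> 'rV[R]_d -> Act R m -> 'rV[R]_d)
  (f : R -> 'rV[R]_d -> Act R m -> 'rV[R]_N)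
  (eps : R) (t : R) (x : 'rV[R]_d) (z : 'M[R]_(N, d)) : set (Act R m) :=
  [set a | inA A a /\
     forall (i : 'I_N) (ai : 'rV[R]_(m i)), A i ai ->
       ham_i b f i t x z a >= ham_i b f i t x z (upd a i ai) - eps].

Definition Heps {R : realType} {d N : nat} {m : 'I_N -> nat}
  (A : forall i : 'I_N, set 'rV[R]_(m i))
  (b : R -> 'rV[R]_d -> Act R m -> 'rV[R]_d)
  (f : R -> 'rV[R]_d -> Act R m -> 'rV[R]_N)
  (eps : R) (t : R) (x : 'rV[R]_d) (z : 'M[R]_(N, d)) : set 'rV[R]_N :=
  [set y | exists a, Eeps A b f eps t x z a /\ enorm (y - ham b f t x z a) < eps].

Definition Hset {R : realType} {d N : nat} {m : 'I_N -> nat}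
  (A : forall i : 'I_N, set 'rV[R]_(m i))
  (b : R -> 'rV[R]_d -> Act R m -> 'rV[R]_d)
  (f : R -> 'rV[R]_d -> Act R m -> 'rV[R]_N)
  (t : R) (x : 'rV[R]_d) (z : 'M[R]_(N, d)) : set 'rV[R]_N :=
  [set y | forall eps : R, 0 < eps -> Heps A b f eps t x z y].

Definition bdd_unif_cont_data {R : realType} {d N : nat} {m : 'I_N -> nat} {k : nat}
  (T : R) (A : forall i : 'I_N, set 'rV[R]_(m i))
  (phi : R -> 'rV[R]_d -> Act R m -> 'rV[R]_k) : Prop :=
  (exists M : R, forall t x a, 0 <= t <= T -> inA A a -> enorm (phi t x a) <= M) /\
  (forall e : R, 0 < e -> exists delta : R, 0 < delta /\
     forall t t' x x' (a a' : Act R m),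
       0 <= t <= T -> 0 <= t' <= T -> inA A a -> inA A a' ->
       `|t - t'| < delta -> enorm (x - x') < delta ->
       (forall i, enorm (a i - a' i) < delta) ->
       enorm (phi t x a - phi t' x' a') < e).

Definition bdd_unif_cont_term {R : realType} {d N : nat} (g : 'rV[R]_d -> 'rV[R]_N) : Prop :=
  (exists M : R, forall x, enorm (g x) <= M) /\
  (forall e : R, 0 < e -> exists delta : R, 0 < delta /\
     forall x x', enorm (x - x') < delta -> enorm (g x - g x') < e).

(* B_0 = 0, continuous paths, each coordinate measurable, and for every
   partition 0 = t_0 < t_1 < ... < t_n <= T the increments
   B_{t_j} - B_{t_(j-1)} are independent with independent N(0, t_j - t_(j-1))
   coordinates (product rule on rectangles). *)
Definition is_std_BM {R : realType} {d0 : measure_display} {Omega : measurableType d0}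
  (P : probability Omega R) {d : nat} (T : R) (B : R -> Omega -> 'rV[R]_d) : Prop :=
  (forall (t : R) (k : 'I_d), measurable_fun setT (fun w => B t w 0 k)) /\
  (forall w, B 0 w = 0) /\
  (forall w, {within `[0, T], continuous (fun t => B t w)}) /\
  (forall (n : nat) (ts : 'I_n.+1 -> R) (U : 'I_n -> 'I_d -> set R),
     ts ord0 = 0 ->
     (forall j : 'I_n, ts (widen_ord (leqnSn n) j) < ts (lift ord0 j)) ->
     ts ord_max <= T ->
     (forall j k, measurable (U j k)) ->
     P [set w | forall j k,
          U j k (B (ts (lift ord0 j)) w 0 k - B (ts (widen_ord (leqnSn n) j)) w 0 k)]
     = (\prod_(j < n) \prod_(k < d)
          normal_prob 0 (Num.sqrt (ts (lift ord0 j) - ts (widen_ord (leqnSn n) j)))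
                      (U j k))%E).

Definition FB {R : realType} {Omega : Type} {d : nat}
  (B : R -> Omega -> 'rV[R]_d) (t : R) : set (set Omega) :=
  <<s [set E | exists (s : R) (k : 'I_d) (U : set R),
                 0 <= s <= t /\ measurable U /\ E = (fun w => B s w 0 k) @^-1` U] >>.

(* progressive measurability of a real process w.r.t. F^B, on [0,T]:
   for each t in [0,T], (s,w) |-> xi s w restricted to [0,t] x Omega is
   B([0,t]) (x) F^B_t - measurable. *)
Definition prog_real {R : realType} {Omega : Type} {d : nat}
  (B : R -> Omega -> 'rV[R]_d) (T : R) (xi : R -> Omega -> R) : Prop :=
  forall t : R, 0 <= t <= T -> forall U : set R, measurable U ->
    <<s [set C | exists (S : set R) (E : set Omega),
            measurable S /\ S `<=` `[0, t] /\ FB B t E /\ C = S `*` E] >>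
      [set p : R * Omega | 0 <= p.1 <= t /\ U (xi p.1 p.2)].

Definition prog {R : realType} {Omega : Type} {d : nat} {p q : nat}
  (B : R -> Omega -> 'rV[R]_d) (T : R) (xi : R -> Omega -> 'M[R]_(p, q)) : Prop :=
  forall i j, prog_real B T (fun t w => xi t w i j).

Definition interval0T {R : realType} (T : R) : set R := `[0, T].

Definition EI {R : realType} {d0 : measure_display} {Omega : measurableType d0}
  (P : probability Omega R) (T : R) (F : R -> Omega -> R) : \bar R :=
  (\int[P]_w \int[lebesgue_measure]_(t in interval0T T) (F t w)%:E)%E.

Definition L2 {R : realType} {d0 : measure_display} {Omega : measurableType d0}
  (P : probability Omega R) {d : nat} (B : R -> Omega -> 'rV[R]_d) (T : R)
  {p q : nat} (xi : R -> Omega -> 'M[R]_(p, q)) : Prop :=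
  prog B T xi /\ (EI P T (fun t w => (enorm (xi t w) ^+ 2)%R) < +oo)%E.

Definition admissible {R : realType} {Omega : Type} {d N : nat} {m : 'I_N -> nat}
  (B : R -> Omega -> 'rV[R]_d) (T : R) (A : forall i : 'I_N, set 'rV[R]_(m i))
  (alpha : R -> Omega -> Act R m) : Prop :=
  forall i : 'I_N, prog B T (fun t w => alpha t w i) /\
    (forall t w, 0 <= t <= T -> A i (alpha t w i)).

From HB Require Import structures.
From mathcomp Require Import all_boot all_order all_algebra.
From mathcomp Require Import all_classical all_reals all_analysis.
From mathcomp Require Import ring lra zify.
Set Implicit Arguments.
Unset Strict Implicit.
Unset Printing Implicit Defensive.
Import Order.TTheory GRing.Theory Num.Theory.
Import numFieldNormedType.Exports.
Local Open Scope classical_set_scope.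
Local Open Scope ring_scope.

(* Fix a tolerance kap. At every state s = (t, x, z, y), the nonemptiness of H(s) yields a
   control a that is an eps-equilibrium at s and for which |y - h(s, a)| is within kap of
   d(y, H(s)). Since the Hamiltonian is uniformly continuous in the state, uniformly in a, and
   H is Hausdorff continuous, the same a remains an (eps + 2 kap)-equilibrium and satisfies
   the distance estimate up to 4 kap on a whole neighbourhood of s. Now cover the state space
   by the grids of mesh 1/(L+1) and give s the common good control of its grid cell of least
   level L for which one exists. The resulting control is a function of (t, X_t, Z_t, eta_t)
   that is constant on countably many measurable cells, hence progressively measurable.
   Running this with eps/2 in place of eps, 4 kap <= eps and Z^eps = Z, the defect is below
   4 kap everywhere, so its expected integral is at most 16 kap^2 T <= eps. *)

(** * Euclidean norm *)

Section EuclideanNorm.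
Variable R : realType.

Lemma sqr_sum_mul_le (I : finType) (u v : I -> R) :
  (\sum_i u i * v i) ^+ 2 <= (\sum_i u i ^+ 2) * (\sum_i v i ^+ 2).
Proof.
(* Lagrange's identity: the gap is half the sum of the squares (u i v j - u j v i)^2. *)
have gap_ge0 : 0 <= \sum_i \sum_j (u i * v j - u j * v i) ^+ 2.
  by apply: sumr_ge0 => i _; apply: sumr_ge0 => j _; exact: sqr_ge0.
have expand i j : (u i * v j - u j * v i) ^+ 2 =
    u i ^+ 2 * v j ^+ 2 + u j ^+ 2 * v i ^+ 2 - 2 * ((u i * v i) * (u j * v j)).
  by ring.
have sum_uv : \sum_i \sum_j (u i ^+ 2 * v j ^+ 2) = (\sum_i u i ^+ 2) * (\sum_i v i ^+ 2).
  by rewrite mulr_suml; apply: eq_bigr => i _; rewrite mulr_sumr.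
have sum_vu : \sum_i \sum_j (u j ^+ 2 * v i ^+ 2) = (\sum_i u i ^+ 2) * (\sum_i v i ^+ 2).
  by rewrite exchange_big.
have sum_mixed : \sum_i \sum_j ((u i * v i) * (u j * v j)) = (\sum_i u i * v i) ^+ 2.
  by rewrite expr2 mulr_suml; apply: eq_bigr => i _; rewrite mulr_sumr.
have lagrange : \sum_i \sum_j (u i * v j - u j * v i) ^+ 2 =
    \sum_i \sum_j (u i ^+ 2 * v j ^+ 2) + \sum_i \sum_j (u j ^+ 2 * v i ^+ 2)
    - 2 * \sum_i \sum_j ((u i * v i) * (u j * v j)).
  rewrite mulr_sumr -big_split -sumrB /=; apply: eq_bigr => i _.
  by rewrite mulr_sumr -big_split -sumrB /=; apply: eq_bigr => j _; exact: expand.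
by move: gap_ge0; rewrite lagrange sum_uv sum_vu sum_mixed; lra.
Qed.

Implicit Types (p q : nat).

Lemma sum_sqr_ge0 p q (M : 'M[R]_(p, q)) : 0 <= \sum_i \sum_j M i j ^+ 2.
Proof. by apply: sumr_ge0 => i _; apply: sumr_ge0 => j _; exact: sqr_ge0. Qed.

Lemma enorm_ge0 p q (M : 'M[R]_(p, q)) : 0 <= enorm M.
Proof. exact: sqrtr_ge0. Qed.

Lemma sqr_enorm p q (M : 'M[R]_(p, q)) : enorm M ^+ 2 = \sum_i \sum_j M i j ^+ 2.
Proof. by rewrite sqr_sqrtr // sum_sqr_ge0. Qed.

Lemma enorm0 p q : enorm (0 : 'M[R]_(p, q)) = 0.
Proof.
rewrite /enorm big1 ?sqrtr0 // => i _; rewrite big1 // => j _.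
by rewrite mxE expr0n.
Qed.

Lemma enormN p q (M : 'M[R]_(p, q)) : enorm (- M) = enorm M.
Proof.
rewrite /enorm; congr Num.sqrt; apply: eq_bigr => i _; apply: eq_bigr => j _.
by rewrite mxE sqrrN.
Qed.

Lemma enorm_distC p q (M M' : 'M[R]_(p, q)) : enorm (M - M') = enorm (M' - M).
Proof. by rewrite -enormN opprB. Qed.

Lemma enorm_entry_le p q (M : 'M[R]_(p, q)) i j : `|M i j| <= enorm M.
Proof.
rewrite -sqrtr_sqr ler_sqrt ?sum_sqr_ge0 //.
rewrite (bigD1 i) //= (bigD1 j) //= -addrA ler_wpDr //.
apply: addr_ge0; first by apply: sumr_ge0 => k _; exact: sqr_ge0.
by apply: sumr_ge0 => k _; apply: sumr_ge0 => l _; exact: sqr_ge0.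
Qed.

Lemma enorm_le_sum p q (M : 'M[R]_(p, q)) : enorm M <= \sum_i \sum_j `|M i j|.
Proof.
set s := \sum_i \sum_j `|M i j|.
have s_ge0 : 0 <= s by apply: sumr_ge0 => i _; apply: sumr_ge0.
rewrite -(ger0_norm s_ge0) -sqrtr_sqr ler_sqrt ?sqr_ge0 //.
rewrite /s !pair_bigA /= [X in _ <= X]expr2 mulr_sumr; apply: ler_sum => k _.
rewrite -[M k.1 k.2 ^+ 2]ger0_norm ?sqr_ge0 // normrX expr2 mulrC.
apply: ler_wpM2r => //; rewrite (bigD1 k) //= ler_wpDr //.
exact: sumr_ge0.
Qed.

Lemma enorm_le_card p q (M : 'M[R]_(p, q)) (h : R) :
  (forall i j, `|M i j| <= h) -> enorm M <= (p * q)%:R * h.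
Proof.
move=> Mh; apply: (le_trans (enorm_le_sum M)).
have -> : (p * q)%:R * h = \sum_(i < p) \sum_(j < q) h.
  by rewrite !sumr_const !card_ord -mulrnA mulr_natl mulnC.
by apply: ler_sum => i _; apply: ler_sum => j _.
Qed.

Lemma enormD p q (M M' : 'M[R]_(p, q)) : enorm (M + M') <= enorm M + enorm M'.
Proof.
set c := \sum_(k : 'I_p * 'I_q) M k.1 k.2 * M' k.1 k.2.
have c_le : c <= enorm M * enorm M'.
  have cs := sqr_sum_mul_le (fun k : 'I_p * 'I_q => M k.1 k.2) (fun k => M' k.1 k.2).
  rewrite /enorm -sqrtrM ?sum_sqr_ge0 // (le_trans (ler_norm c)) //.
  by rewrite -sqrtr_sqr ler_sqrt ?mulr_ge0 ?sum_sqr_ge0 // !pair_bigA.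
have sqr_sum : enorm (M + M') ^+ 2 = enorm M ^+ 2 + enorm M' ^+ 2 + 2 * c.
  rewrite !sqr_enorm !pair_bigA /= mulr_sumr -!big_split /=.
  by apply: eq_bigr => k _; rewrite mxE; ring.
have := enorm_ge0 M; have := enorm_ge0 M'; have := enorm_ge0 (M + M').
move: sqr_sum c_le; nra.
Qed.

Lemma enorm_distD p q (M1 M2 M3 : 'M[R]_(p, q)) :
  enorm (M1 - M3) <= enorm (M1 - M2) + enorm (M2 - M3).
Proof. by rewrite -(subrKA M2) enormD. Qed.

Lemma enorm_dist_dist p q (M1 M2 : 'M[R]_(p, q)) :
  `|enorm M1 - enorm M2| <= enorm (M1 - M2).
Proof.
have := enormD (M1 - M2) M2; rewrite subrK => h12.
have := enormD (M2 - M1) M1; rewrite subrK enorm_distC => h21.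
by rewrite ler_norml; apply/andP; split; lra.
Qed.

Lemma enorm_defect_lipschitz p q (y y' h h' : 'M[R]_(p, q)) (r r' : R) :
  `|(enorm (y - h) - r) - (enorm (y' - h') - r')| <=
    enorm (y - y') + enorm (h - h') + `|r - r'|.
Proof.
rewrite (_ : _ - _ = (enorm (y - h) - enorm (y' - h')) + (r' - r)); last by ring.
rewrite (le_trans (ler_normD _ _)) // lerD //; last by rewrite distrC.
rewrite (le_trans (enorm_dist_dist _ _)) //.
have -> : y - h - (y' - h') = (y - y') + - (h - h').
  by rewrite !opprB addrACA [RHS]addrACA (addrC (- y')).
by rewrite (le_trans (enormD _ _)) // enormN.
Qed.

End EuclideanNorm.

(** * Distance to a set *)

Section PointSetDistance.
Variables (R : realType) (n : nat).
Implicit Types (y z : 'rV[R]_n) (H : set 'rV[R]_n).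

Let dists y H := [set enorm (y - z) | z in H].

Let dists_lbound y H : has_lbound (dists y H).
Proof. by exists 0 => _ [z _ <-]; exact: enorm_ge0. Qed.

Let dists_neq0 y H : H !=set0 -> dists y H !=set0.
Proof. by move=> [z Hz]; exists (enorm (y - z)); exists z. Qed.

Lemma dist_pt_le y H z : H z -> dist_pt y H <= enorm (y - z).
Proof. by move=> Hz; apply: ge_inf; [exact: dists_lbound | exists z]. Qed.

Lemma dist_pt_ge y H c :
  H !=set0 -> (forall z, H z -> c <= enorm (y - z)) -> c <= dist_pt y H.
Proof.
by move=> H0 Hc; apply: lb_le_inf; [exact: dists_neq0 | move=> _ [z Hz <-]; exact: Hc].
Qed.

Lemma dist_pt_approx y H e : H !=set0 -> 0 < e ->
  exists2 z, H z & enorm (y - z) < dist_pt y H + e.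
Proof.
move=> H0 e_gt0.
have [_ [z Hz <-] yz] := inf_adherent e_gt0 (conj (dists_neq0 y H0) (dists_lbound y H)).
by exists z.
Qed.

Let dist_pt_le_shift y y' H : H !=set0 -> dist_pt y H <= dist_pt y' H + enorm (y - y').
Proof.
move=> H0; rewrite -lerBlDr; apply: dist_pt_ge => // z Hz.
rewrite lerBlDr (le_trans (dist_pt_le y Hz)) //.
by rewrite [leRHS]addrC enorm_distD.
Qed.

Lemma dist_pt_lipschitz y y' H : H !=set0 ->
  `|dist_pt y H - dist_pt y' H| <= enorm (y - y').
Proof.
move=> H0; have := dist_pt_le_shift y y' H0; have := dist_pt_le_shift y' y H0.
by rewrite enorm_distC ler_norml => *; apply/andP; split; lra.
Qed.

Lemma hausdorffC H1 H2 : hausdorff H1 H2 = hausdorff H2 H1.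
Proof. by rewrite /hausdorff maxC. Qed.

Let dist_pt_le_hausdorff y H1 H2 e : H1 !=set0 -> H2 !=set0 ->
  (hausdorff H1 H2 < e%:E)%E -> dist_pt y H1 <= dist_pt y H2 + e.
Proof.
move=> H10 H20; rewrite /hausdorff gt_max => /andP[_ H21].
rewrite -lerBlDr; apply: dist_pt_ge => // z Hz.
have z_near : dist_pt z H1 < e.
  by rewrite -lte_fin; apply: le_lt_trans H21; apply: ereal_sup_ubound; exists z.
have gap_gt0 : 0 < e - dist_pt z H1 by rewrite subr_gt0.
have [z1 Hz1 zz1] := dist_pt_approx z H10 gap_gt0.
rewrite lerBlDr (le_trans (dist_pt_le y Hz1)) // (le_trans (enorm_distD y z z1)) //.
by rewrite lerD2l ltW // -(addrNK (dist_pt z H1) e) [e - _ + _]addrC.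
Qed.

Lemma dist_pt_hausdorff y H1 H2 e : H1 !=set0 -> H2 !=set0 ->
  (hausdorff H1 H2 < e%:E)%E -> `|dist_pt y H1 - dist_pt y H2| <= e.
Proof.
move=> H10 H20 He; have := dist_pt_le_hausdorff y H10 H20 He.
rewrite hausdorffC in He; have := dist_pt_le_hausdorff y H20 H10 He.
by rewrite ler_norml => *; apply/andP; split; lra.
Qed.

End PointSetDistance.

(** * Hamiltonians *)

Lemma enorm_row_le (R : realType) p q (M : 'M[R]_(p, q)) i : enorm (row i M) <= enorm M.
Proof.
rewrite ler_sqrt ?sum_sqr_ge0 // big_ord1 (bigD1 i) //= ler_wpDr //.
  by apply: sumr_ge0 => k _; apply: sumr_ge0 => l _; exact: sqr_ge0.
by apply: ler_sum => j _; rewrite mxE.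
Qed.

Lemma norm_dotp_le (R : realType) n (u v : 'rV[R]_n) : `|dotp u v| <= enorm u * enorm v.
Proof.
rewrite -sqrtr_sqr /enorm -sqrtrM ?sum_sqr_ge0 // ler_sqrt; last first.
  by rewrite mulr_ge0 // sum_sqr_ge0.
by rewrite !big_ord1 sqr_sum_mul_le.
Qed.

Lemma dotp_subBB (R : realType) n (u u' v v' : 'rV[R]_n) :
  dotp u v - dotp u' v' = dotp (u - u') v + dotp u' (v - v').
Proof. by rewrite /dotp -sumrB -big_split /=; apply: eq_bigr => k _; rewrite !mxE; ring. Qed.

Section Hamiltonian.
Variables (R : realType) (d N : nat) (m : 'I_N -> nat).
Local Unset Implicit Arguments.
Variable A : forall i : 'I_N, set 'rV[R]_(m i).
Local Set Implicit Arguments.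
Variables (b : R -> 'rV[R]_d -> Act R m -> 'rV[R]_d) (f : R -> 'rV[R]_d -> Act R m -> 'rV[R]_N).
Implicit Types (t : R) (x : 'rV[R]_d) (z : 'M[R]_(N, d)) (y : 'rV[R]_N) (a : Act R m).

Lemma inA_upd a i (ai : 'rV[R]_(m i)) : inA A a -> A i ai -> inA A (upd a i ai).
Proof.
move=> Aa Aai j; rewrite /upd; case: (i =P j) => [ij|_]; last exact: Aa.
by case: j / ij.
Qed.

Lemma le_Eeps e1 e2 t x z a : e1 <= e2 -> Eeps A b f e1 t x z a -> Eeps A b f e2 t x z a.
Proof.
move=> e12 [Aa eq_a]; split => // i ai Aai; apply: le_trans (eq_a i ai Aai).
by rewrite lerD2l lerN2.
Qed.

Lemma Hset_near_optimal t x z y e kap :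
  Hset A b f t x z !=set0 -> 0 < e -> 0 < kap ->
  exists a, Eeps A b f e t x z a /\
    `|enorm (y - ham b f t x z a) - dist_pt y (Hset A b f t x z)| < kap.
Proof.
move=> H0 e_gt0 kap_gt0.
have kap2_gt0 : 0 < kap / 2 by rewrite divr_gt0.
have [y' Hy' yy'] := dist_pt_approx y H0 kap2_gt0.
have min_gt0 : 0 < Num.min e (kap / 2) by rewrite lt_min e_gt0 kap2_gt0.
have [a [Ea y'a]] := Hy' _ min_gt0.
exists a; split; first by apply: le_Eeps Ea; rewrite ge_min lexx.
have {}y'a : enorm (y' - ham b f t x z a) < kap / 2.
  by apply: (lt_le_trans y'a); rewrite ge_min lexx orbT.
have := enorm_distD y y' (ham b f t x z a).
have := enorm_distD y (ham b f t x z a) y'; rewrite (enorm_distC (ham b f t x z a)).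
have := dist_pt_le y Hy'.
by rewrite ltr_norml => *; apply/andP; split; lra.
Qed.

Lemma Eeps_perturb e kap t x z t' x' z' a :
  (forall a', inA A a' -> enorm (ham b f t' x' z' a' - ham b f t x z a') < kap) ->
  Eeps A b f e t x z a -> Eeps A b f (e + 2 * kap) t' x' z' a.
Proof.
move=> close [Aa eq_a]; split => // i ai Aai.
have entry_close a' : inA A a' ->
    `|ham_i b f i t' x' z' a' - ham_i b f i t x z a'| <= kap.
  move=> Aa'; have := enorm_entry_le (ham b f t' x' z' a' - ham b f t x z a') 0 i.
  by rewrite !mxE => /le_trans; apply; exact: ltW (close a' Aa').
have := entry_close _ Aa; have := entry_close _ (inA_upd Aa Aai).
have := eq_a i ai Aai.
by rewrite !ler_norml => ? /andP[? ?] /andP[? ?]; lra.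
Qed.

Lemma ham_i_dist_le i t x z t' x' z' a :
  `|ham_i b f i t' x' z' a - ham_i b f i t x z a| <=
    enorm (f t' x' a - f t x a) + enorm (b t' x' a - b t x a) * enorm z'
    + enorm (b t x a) * enorm (z' - z).
Proof.
have -> : ham_i b f i t' x' z' a - ham_i b f i t x z a =
    (f t' x' a - f t x a) 0 i + (dotp (b t' x' a) (row i z') - dotp (b t x a) (row i z)).
  by rewrite /ham_i !mxE; ring.
rewrite dotp_subBB -linearB /= addrA (le_trans (ler_normD _ _)) // lerD //.
  rewrite (le_trans (ler_normD _ _)) // lerD ?enorm_entry_le //.
  rewrite (le_trans (norm_dotp_le _ _)) // ler_wpM2l ?enorm_ge0 //.
  exact: enorm_row_le.
rewrite (le_trans (norm_dotp_le _ _)) // ler_wpM2l ?enorm_ge0 //.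
exact: enorm_row_le.
Qed.

End Hamiltonian.

Definition Hset_continuous (R : realType) d N (m : 'I_N -> nat) (T : R)
    (A : forall i : 'I_N, set 'rV[R]_(m i))
    (b : R -> 'rV[R]_d -> Act R m -> 'rV[R]_d) (f : R -> 'rV[R]_d -> Act R m -> 'rV[R]_N) :=
  forall t x z, 0 <= t <= T -> forall e : R, 0 < e -> exists delta : R, 0 < delta /\
    forall t' x' z', 0 <= t' <= T ->
      `|t - t'| < delta -> enorm (x - x') < delta -> enorm (z - z') < delta ->
      (hausdorff (Hset A b f t x z) (Hset A b f t' x' z') < e%:E)%E.

Section ContinuityInState.
Variables (R : realType) (d N : nat) (m : 'I_N -> nat) (T : R).
Local Unset Implicit Arguments.
Variable A : forall i : 'I_N, set 'rV[R]_(m i).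
Local Set Implicit Arguments.
Variables (b : R -> 'rV[R]_d -> Act R m -> 'rV[R]_d) (f : R -> 'rV[R]_d -> Act R m -> 'rV[R]_N).

Lemma ham_unif_cont t x z kap :
  bdd_unif_cont_data T A b -> bdd_unif_cont_data T A f -> 0 <= t <= T -> 0 < kap ->
  exists2 del, 0 < del & forall t' x' z', 0 <= t' <= T ->
    `|t - t'| < del -> enorm (x - x') < del -> enorm (z - z') < del ->
    forall a, inA A a -> enorm (ham b f t' x' z' a - ham b f t x z a) < kap.
Proof.
move=> [[Mb Mb_bound] b_uc] [_ f_uc] tT kap_gt0.
pose c := kap / (3 * N.+1%:R).
have c_gt0 : 0 < c by rewrite divr_gt0 // mulr_gt0 // ltr0n.
pose K := enorm z + 1; pose M := `|Mb| + 1.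
have K_gt0 : 0 < K by rewrite ltr_wpDl ?enorm_ge0.
have M_gt0 : 0 < M by rewrite ltr_wpDl.
have [df [df_gt0 f_close]] := f_uc c c_gt0.
have [db [db_gt0 b_close]] := b_uc (c / K) (divr_gt0 c_gt0 K_gt0).
exists (Num.min (Num.min df db) (Num.min (c / M) 1)).
  by rewrite !lt_min df_gt0 db_gt0 divr_gt0 ?ltr01.
move=> t' x' z' t'T; rewrite !lt_min.
move=> /andP[/andP[tf tb] _] /andP[/andP[xf xb] _] /andP[_ /andP[zM z1]] a Aa.
have a_df i : enorm (a i - a i) < df by rewrite subrr enorm0.
have a_db i : enorm (a i - a i) < db by rewrite subrr enorm0.
have f_term : enorm (f t' x' a - f t x a) < c.
  by apply: f_close => //; rewrite 1?distrC 1?enorm_distC.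
have b_term : enorm (b t' x' a - b t x a) * enorm z' < c.
  have z'K : enorm z' <= K.
    rewrite -[z'](subKr z) (le_trans (enormD _ _)) // enormN lerD2l ltW //.
  have b'b : enorm (b t' x' a - b t x a) < c / K.
    by apply: b_close => //; rewrite 1?distrC 1?enorm_distC.
  rewrite (le_lt_trans (ler_wpM2l (enorm_ge0 _) z'K)) //.
  by rewrite -ltr_pdivlMr.
have z_term : enorm (b t x a) * enorm (z' - z) < c.
  have bM : enorm (b t x a) < M.
    by rewrite (le_lt_trans (Mb_bound t x a tT Aa)) // (le_lt_trans (ler_norm Mb)) ?ltrDl.
  rewrite enorm_distC (le_lt_trans (ler_wpM2r (enorm_ge0 _) (ltW bM))) //.
  by rewrite mulrC -ltr_pdivlMr.
have entry_le i j : `|(ham b f t' x' z' a - ham b f t x z a) i j| <= 3 * c.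
  rewrite ord1 !mxE (le_trans (ham_i_dist_le _ _ _ _ _ _ _ _ _ _)) //.
  by lra.
rewrite (le_lt_trans (enorm_le_card entry_le)) // mul1n.
have -> : kap = N.+1%:R * (3 * c).
  by rewrite /c; field; rewrite addrC natr1 pnatr_eq0.
have c3_gt0 : 0 < 3 * c by rewrite mulr_gt0.
by rewrite (ltr_pM2r c3_gt0) ltr_nat.
Qed.

Lemma dist_Hset_cont t x z y kap :
  (forall t x z, 0 <= t <= T -> Hset A b f t x z !=set0) -> Hset_continuous T A b f ->
  0 <= t <= T -> 0 < kap ->
  exists2 del, 0 < del & forall t' x' z' (y' : 'rV[R]_N), 0 <= t' <= T ->
    `|t - t'| < del -> enorm (x - x') < del -> enorm (z - z') < del -> enorm (y - y') < del ->
    `|dist_pt y' (Hset A b f t' x' z') - dist_pt y (Hset A b f t x z)| < kap.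
Proof.
move=> H_neq0 H_cont tT kap_gt0.
have kap2_gt0 : 0 < kap / 2 by rewrite divr_gt0.
have [del [del_gt0 H_close]] := H_cont t x z tT _ kap2_gt0.
exists (Num.min del (kap / 2)); first by rewrite lt_min del_gt0.
move=> t' x' z' y' t'T; rewrite !lt_min.
move=> /andP[tt' _] /andP[xx' _] /andP[zz' _] /andP[_ yy'].
have := dist_pt_hausdorff y (H_neq0 _ _ _ tT) (H_neq0 _ _ _ t'T) (H_close _ _ _ t'T tt' xx' zz').
have := dist_pt_lipschitz y' y (H_neq0 _ x' z' t'T); rewrite enorm_distC.
by rewrite !ler_norml ltr_norml => /andP[? ?] /andP[? ?]; apply/andP; split; lra.
Qed.

End ContinuityInState.

(** * Grid selection *)

Lemma floor_eq_dist_lt (R : realType) (c u v : R) :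
  0 < c -> Num.floor (c * u) = Num.floor (c * v) -> `|u - v| < c^-1.
Proof.
move=> c_gt0 uv; have := floor_itv (c * u); have := floor_itv (c * v).
rewrite uv intrD => /andP[v1 v2] /andP[u1 u2].
have -> : u - v = (c * u - c * v) / c by field; rewrite gt_eqF.
rewrite normrM (@gtr0_norm _ c^-1) ?invr_gt0 // ltr_pdivrMr // mulVf ?gt_eqF //.
by rewrite ltr_norml; apply/andP; split; lra.
Qed.

Lemma measurable_floor_eq (R : realType) (c : R) (j : int) :
  measurable [set u : R | Num.floor (c * u) = j].
Proof.
have -> : [set u : R | Num.floor (c * u) = j] =
    setT `&` ( *%R c) @^-1` [set` `[j%:~R, (j + 1)%:~R[].
  apply/seteqP; split => u /=; rewrite in_itv /= -floor_eq.
    by move=> ->.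
  by move=> [_ /eqP].
exact: measurable_realfun.mulrl_measurable.
Qed.

Section GridSelection.
Variables (R : realType) (S X : Type) (C : finType) (crd : S -> C -> R).
Variables (dom : set S) (Q : S -> X -> Prop) (x0 : X).

Definition grid_key (L : nat) (s : S) : {ffun C -> int} :=
  [ffun c => Num.floor (L.+1%:R * crd s c)].

Lemma grid_key_dist_lt L p q c :
  grid_key L p = grid_key L q -> `|crd p c - crd q c| < L.+1%:R^-1.
Proof.
move=> /ffunP /(_ c); rewrite !ffunE.
by apply: floor_eq_dist_lt; rewrite ltr0n.
Qed.

Definition good_cell L (k : {ffun C -> int}) :=
  exists x, forall p, dom p -> grid_key L p = k -> Q p x.

Definition cell_choice L k : X :=
  if pselect (good_cell L k) is left h then projT1 (cid h) else x0.

Lemma cell_choiceP L k p :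
  good_cell L k -> dom p -> grid_key L p = k -> Q p (cell_choice L k).
Proof. by rewrite /cell_choice; case: pselect => // h _; exact: (projT2 (cid h)). Qed.

Definition good_level s L := good_cell L (grid_key L s).

Definition grid_level s : nat :=
  xget 0%N [set L | good_level s L /\ forall L', (L' < L)%N -> ~ good_level s L'].

Definition grid_select s : X := cell_choice (grid_level s) (grid_key (grid_level s) s).

Hypothesis grid_fine : forall s, dom s -> exists L, good_level s L.

Lemma grid_levelP s : dom s ->
  good_level s (grid_level s) /\ forall L', (L' < grid_level s)%N -> ~ good_level s L'.
Proof.
move=> /grid_fine [L sL].
have ex_good : exists L, `[< good_level s L >] by exists L; apply/asboolP.
have [L0 /asboolP sL0 L0_min] := ex_minnP ex_good.
have least : exists L, good_level s L /\ forall L', (L' < L)%N -> ~ good_level s L'.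
  exists L0; split => // L' L'L0 sL'.
  by have := L0_min L' (asboolT sL'); rewrite leqNgt L'L0.
exact: (xgetPex 0%N least).
Qed.

Lemma grid_selectP s : dom s -> Q s (grid_select s).
Proof. by move=> ds; have [sL _] := grid_levelP ds; exact: cell_choiceP. Qed.

Variables (dW : measure_display) (W : measurableType dW) (D : set W) (phi : W -> S).
Hypotheses (mD : measurable D) (D_dom : forall w, D w -> dom (phi w)).
Hypothesis mcrd : forall c, measurable_fun D (fun w => crd (phi w) c).

Lemma measurable_grid_key L k : measurable (D `&` [set w | grid_key L (phi w) = k]).
Proof.
have -> : D `&` [set w | grid_key L (phi w) = k] = D `&` \bigcap_(c in [set: C])
    (D `&` (fun w => crd (phi w) c) @^-1` [set u | Num.floor (L.+1%:R * u) = k c]).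
  apply/seteqP; split => w [Dw wk]; split => //.
    by move=> c _; split => //=; rewrite -wk ffunE.
  by apply/ffunP => c; rewrite ffunE; have [] := wk c I.
apply: measurableI => //; apply: fin_bigcap_measurable; first exact: finite_finset.
by move=> c _; apply: mcrd => //; exact: measurable_floor_eq.
Qed.

Lemma measurable_good_level L : measurable (D `&` [set w | good_level (phi w) L]).
Proof.
have -> : D `&` [set w | good_level (phi w) L] = \bigcup_(k : {ffun C -> int})
    (if pselect (good_cell L k) then D `&` [set w | grid_key L (phi w) = k] else set0).
  apply/seteqP; split => w.
    by move=> [Dw wL]; exists (grid_key L (phi w)) => //; case: pselect.
  move=> [k _]; case: pselect => // kL [Dw wk].
  have wL : good_level (phi w) L by rewrite /good_level wk.
  exact: (conj Dw wL).
apply: countable_bigcupT_measurable; first exact: countableP.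
by move=> k; case: pselect => kL; [exact: measurable_grid_key | exact: measurable0].
Qed.

Lemma measurable_grid_level L : measurable (D `&` [set w | grid_level (phi w) = L]).
Proof.
have -> : D `&` [set w | grid_level (phi w) = L] =
    (D `&` [set w | good_level (phi w) L]) `&`
    \bigcap_(L' in `I_L) (D `\` [set w | good_level (phi w) L']).
  apply/seteqP; split => w.
    move=> [Dw <-]; have [wL wmin] := grid_levelP (D_dom Dw).
    by split => // L' L'L; split => //; exact: wmin.
  move=> [[Dw wL] wmin]; split => //; have [wl wlmin] := grid_levelP (D_dom Dw).
  have [lt|lt|//] := ltngtP (grid_level (phi w)) L.
    by have [_ []] := wmin _ lt.
  by case: (wlmin _ lt wL).
apply: measurableI; first exact: measurable_good_level.
apply: fin_bigcap_measurable; first exact: finite_II.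
by move=> L' _; apply: measurableID => //; exact: measurable_good_level.
Qed.

Lemma measurable_fun_grid_select (dY : measure_display) (Y : measurableType dY) (h : X -> Y) :
  measurable_fun D (fun w => h (grid_select (phi w))).
Proof.
move=> _ U _.
have -> : D `&` (fun w => h (grid_select (phi w))) @^-1` U =
    \bigcup_(o : nat * {ffun C -> int}) (if pselect (U (h (cell_choice o.1 o.2)))
      then (D `&` [set w | grid_level (phi w) = o.1]) `&`
           (D `&` [set w | grid_key o.1 (phi w) = o.2])
      else set0).
  apply/seteqP; split => w.
    move=> [Dw wU]; exists (grid_level (phi w), grid_key (grid_level (phi w)) (phi w)) => //=.
    by case: pselect.
  move=> [[L k] _] /=; case: pselect => // kU [[Dw wL] [_ wk]].
  by split => //=; rewrite /grid_select wL wk.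
apply: countable_bigcupT_measurable; first exact: countableP.
move=> [L k]; case: pselect => kU //=.
by apply: measurableI; [exact: measurable_grid_level | exact: measurable_grid_key].
Qed.

End GridSelection.

(** * Progressive measurability *)

Lemma within_continuous_dist_lt (R : realType) (g : R -> R) (T s e : R) :
  {within `[0, T], continuous g} -> 0 <= s <= T -> 0 < e ->
  exists2 del, 0 < del & forall r, 0 <= r <= T -> `|s - r| < del -> `|g s - g r| < e.
Proof.
move=> g_cont sT e_gt0.
have := (subspace_continuousP _ _).1 g_cont s; rewrite /= in_itv /= => /(_ sT).
move/cvgrPdist_lt/(_ e e_gt0); rewrite /within /= => /nbhs_ballP [del del_gt0 near_s].
by exists del => // r rT sr; have := near_s r sr; rewrite in_itv /=; apply.
Qed.

(* [prog_space B t] carries the sigma-algebra B([0, t]) (x) F^B_t used in [prog_real]. *)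
Definition prog_rects (R : realType) (Omega : pointedType) d
    (B : R -> Omega -> 'rV[R]_d) (t : R) : set (set (R * Omega)) :=
  [set C | exists (S : set R) (E : set Omega),
     measurable S /\ S `<=` `[0, t] /\ FB B t E /\ C = S `*` E].
Arguments prog_rects {R Omega d} B t.

Definition prog_space (R : realType) (Omega : pointedType) d
  (B : R -> Omega -> 'rV[R]_d) (t : R) := g_sigma_algebraType (prog_rects B t).
Arguments prog_space {R Omega d} B t.

Definition prog_dom (R : realType) (Omega : pointedType) d
  (B : R -> Omega -> 'rV[R]_d) (t : R) : set (prog_space B t) := [set p | 0 <= p.1 <= t].
Arguments prog_dom {R Omega d} B t.

Section ProgressiveMeasurability.
Variables (R : realType) (Omega : pointedType) (d : nat) (B : R -> Omega -> 'rV[R]_d).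

Lemma measurable_prog_rect t (S : set R) (E : set Omega) :
  measurable S -> S `<=` `[0, t] -> FB B t E -> measurable (S `*` E : set (prog_space B t)).
Proof. by move=> mS St FE; apply: sub_sigma_algebra; exists S, E. Qed.

Lemma FB_setT t : FB B t setT.
Proof. exact: (@measurableT _ (g_sigma_algebraType _)). Qed.

Lemma measurable_prog_dom t : measurable (prog_dom B t).
Proof.
have -> : prog_dom B t = `[0, t]%classic `*` setT.
  by apply/seteqP; split => -[s w] /=; rewrite in_itv /= => // -[].
by apply: measurable_prog_rect => //; exact: FB_setT.
Qed.

Lemma prog_real_measurable_fun T (xi : R -> Omega -> R) :
  prog_real B T xi <->
  forall t, 0 <= t <= T -> measurable_fun (prog_dom B t) (fun p : prog_space B t => xi p.1 p.2).
Proof.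
split => [xi_prog t tT _ U mU | xi_meas t tT U mU]; first exact: xi_prog.
exact (xi_meas t tT (@measurable_prog_dom t) U mU).
Qed.

Lemma measurable_fun_time t : measurable_fun (prog_dom B t) (fun p : prog_space B t => p.1).
Proof.
move=> _ U mU.
have -> : prog_dom B t `&` (fun p : prog_space B t => p.1) @^-1` U =
    (`[0, t]%classic `&` U) `*` setT.
  by apply/seteqP; split => -[s w] /=; rewrite in_itv /= => -[].
by apply: measurable_prog_rect; [exact: measurableI | exact: subIsetl | exact: FB_setT].
Qed.

Definition clamp (t r : R) := Num.min t (Num.max 0 r).

Lemma clamp_itv t r : 0 <= t -> 0 <= clamp t r <= t.
Proof. by move=> t_ge0; rewrite le_min t_ge0 le_max lexx ge_min lexx. Qed.

Lemma clamp_id t r : 0 <= r <= t -> clamp t r = r.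
Proof. by move=> /andP[r_ge0 rt]; rewrite /clamp (max_r r_ge0) (min_r rt). Qed.

(* Clamping keeps every sampling time in [0, t], so that the sample is F^B_t-measurable
   even off [prog_dom B t]. *)
Definition sampled_path (t : R) (k : 'I_d) (n : nat) (p : R * Omega) : R :=
  B (clamp t ((Num.floor (n.+1%:R * p.1))%:~R / n.+1%:R)) p.2 0 k.

Lemma measurable_fun_sampled_path t k n : 0 <= t ->
  measurable_fun (prog_dom B t) (fun p : prog_space B t => sampled_path t k n p).
Proof.
move=> t_ge0 _ U mU.
have -> : prog_dom B t `&` (fun p : prog_space B t => sampled_path t k n p) @^-1` U =
    \bigcup_(j : int) ((`[0, t]%classic `&` [set s : R | Num.floor (n.+1%:R * s) = j]) `*`
      ((fun w => B (clamp t (j%:~R / n.+1%:R)) w 0 k) @^-1` U)).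
  apply/seteqP; split => -[s w] /=.
    by move=> [st wU]; exists (Num.floor (n.+1%:R * s)) => //; split => //=; rewrite in_itv.
  move=> [j _ [[st sj] wU]]; split; first by move: st; rewrite /= in_itv.
  by rewrite /sampled_path /= sj.
apply: countable_bigcupT_measurable; first exact: countableP.
move=> j; apply: measurable_prog_rect.
- by apply: measurableI => //; exact: measurable_floor_eq.
- exact: subIsetl.
- by apply: sub_sigma_algebra; exists (clamp t (j%:~R / n.+1%:R)), k, U; rewrite clamp_itv.
Qed.

Lemma measurable_fun_path T t k :
  (forall w, {within `[0, T], continuous (fun s => B s w)}) -> 0 <= t <= T ->
  measurable_fun (prog_dom B t) (fun p : prog_space B t => B p.1 p.2 0 k).
Proof.
move=> B_cont /andP[t_ge0 tT].
apply: (measurable_realfun.measurable_fun_cvg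
  (h := fun n (p : prog_space B t) => sampled_path t k n p)).
  by move=> n; exact: measurable_fun_sampled_path.
move=> [s w] /= /andP[s_ge0 st]; apply/cvgrPdist_lt => e e_gt0.
have sT : 0 <= s <= T by rewrite s_ge0 (le_trans st tT).
have coord_cont := @within_continuous_comp _ _ _ `[0, T] (B^~ w) (fun M : 'rV[R]_d => M 0 k)
  (fun M _ => @coord_continuous R 1 d 0 k M) (B_cont w).
have [del del_gt0 near_s] := within_continuous_dist_lt coord_cont sT e_gt0.
apply: filterS (near_infty_natSinv_lt (PosNum del_gt0)) => n /= n_del.
rewrite /sampled_path /=; set c : R := n.+1%:R; set u := (Num.floor (c * s))%:~R / c.
have c_gt0 : 0 < c by rewrite ltr0n.
have u_ge0 : 0 <= u.
  by apply: divr_ge0; [rewrite ler0z floor_ge0 mulr_ge0 // ltW | exact: ltW].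
have us : u <= s by rewrite ler_pdivrMr // mulrC floor_le.
have su : s - u < c^-1.
  have -> : s - u = (c * s - (Num.floor (c * s))%:~R) / c by rewrite /u; field; rewrite gt_eqF.
  rewrite ltr_pdivrMr // mulVf ?gt_eqF //.
  by have /andP[_] := floor_itv (c * s); rewrite intrD; lra.
rewrite clamp_id ?u_ge0 ?(le_trans us st) // near_s ?u_ge0 ?(le_trans us (le_trans st tT)) //.
by rewrite ger0_norm ?subr_ge0 // (lt_trans su).
Qed.

End ProgressiveMeasurability.

(** * Selection of near-equilibria *)

Section NearEquilibriumSelection.
Variables (R : realType) (d N : nat) (m : 'I_N -> nat) (T : R).
Local Unset Implicit Arguments.
Variable A : forall i : 'I_N, set 'rV[R]_(m i).
Local Set Implicit Arguments.
Variables (b : R -> 'rV[R]_d -> Act R m -> 'rV[R]_d) (f : R -> 'rV[R]_d -> Act R m -> 'rV[R]_N).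
Hypotheses (hb : bdd_unif_cont_data T A b) (hf : bdd_unif_cont_data T A f).
Hypothesis H_neq0 : forall t x z, 0 <= t <= T -> Hset A b f t x z !=set0.
Hypothesis H_cont : Hset_continuous T A b f.
Variables (eps kap : R).
Hypotheses (eps_gt0 : 0 < eps) (kap_gt0 : 0 < kap).

Record state := State { st_t : R; st_x : 'rV[R]_d; st_z : 'M[R]_(N, d); st_y : 'rV[R]_N }.

Definition state_index := ((unit + 'I_d) + (('I_N * 'I_d) + 'I_N))%type.

Definition state_coord (s : state) (c : state_index) : R :=
  match c with
  | inl (inl _) => st_t s
  | inl (inr j) => st_x s 0 j
  | inr (inl ij) => st_z s ij.1 ij.2
  | inr (inr i) => st_y s 0 i
  end.

Definition admissible_time (s : state) := 0 <= st_t s <= T.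

Definition near_equilibrium (s : state) (a : Act R m) :=
  Eeps A b f (eps + 2 * kap) (st_t s) (st_x s) (st_z s) a /\
  `|enorm (st_y s - ham b f (st_t s) (st_x s) (st_z s) a)
    - dist_pt (st_y s) (Hset A b f (st_t s) (st_x s) (st_z s))| < 4 * kap.

Definition state_close (del : R) (p s : state) :=
  [/\ `|st_t s - st_t p| < del, enorm (st_x s - st_x p) < del,
      enorm (st_z s - st_z p) < del & enorm (st_y s - st_y p) < del].

Lemma near_equilibrium_locally s : admissible_time s ->
  exists a, exists2 del, 0 < del &
    forall p, admissible_time p -> state_close del p s -> near_equilibrium p a.
Proof.
move=> sT; have s_neq0 := H_neq0 (st_x s) (st_z s) sT.
have [a [Ea defect_s]] := Hset_near_optimal (st_y s) s_neq0 eps_gt0 kap_gt0.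
have [d1 d1_gt0 ham_close] := ham_unif_cont (st_x s) (st_z s) hb hf sT kap_gt0.
have [d2 d2_gt0 dist_close] := dist_Hset_cont (st_x s) (st_z s) (st_y s) H_neq0 H_cont sT kap_gt0.
exists a, (Num.min (Num.min d1 d2) kap); first by rewrite !lt_min d1_gt0 d2_gt0.
move=> p pT; rewrite /state_close !lt_min.
move=> [/andP[/andP[t1 t2] _] /andP[/andP[x1 x2] _] /andP[/andP[z1 z2] _] /andP[/andP[_ y2] yk]].
have ham_near := ham_close _ _ _ pT t1 x1 z1.
split; first exact: Eeps_perturb ham_near Ea.
have := enorm_defect_lipschitz (st_y p) (st_y s) (ham b f (st_t p) (st_x p) (st_z p) a)
  (ham b f (st_t s) (st_x s) (st_z s) a)
  (dist_pt (st_y p) (Hset A b f (st_t p) (st_x p) (st_z p)))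
  (dist_pt (st_y s) (Hset A b f (st_t s) (st_x s) (st_z s))).
have := ham_near a Ea.1; have := dist_close _ _ _ _ pT t2 x2 z2 y2.
rewrite enorm_distC in yk; move: defect_s; rewrite ltr_norml => /andP[? ?] ? ?.
by rewrite ler_norml ltr_norml => /andP[? ?]; apply/andP; split; lra.
Qed.

Let K : R := (d + N * d + N).+1%:R.

Lemma grid_key_state_close L del p s : K / L.+1%:R < del ->
  grid_key state_coord L p = grid_key state_coord L s -> state_close del p s.
Proof.
move=> Kdel ps; pose h : R := L.+1%:R^-1.
have h_gt0 : 0 < h by rewrite invr_gt0 ltr0n.
have coord_close c : `|state_coord s c - state_coord p c| <= h.
  by rewrite distrC ltW // grid_key_dist_lt.
have small n : (n <= d + N * d + N)%N -> n%:R * h < del.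
  by move=> nK; apply: lt_trans Kdel; rewrite ltr_pM2r // ltr_nat ltnS.
split.
- apply: le_lt_trans (coord_close (inl (inl tt))) (le_lt_trans _ Kdel).
  by rewrite ler_peMl ?(ltW h_gt0) // /K ler1n.
- have : enorm (st_x s - st_x p) <= (1 * d)%:R * h.
    by apply: enorm_le_card => i j; rewrite ord1 !mxE; exact: (coord_close (inl (inr j))).
  by move/le_lt_trans; apply; rewrite small //; lia.
- have : enorm (st_z s - st_z p) <= (N * d)%:R * h.
    by apply: enorm_le_card => i j; rewrite !mxE; exact: (coord_close (inr (inl (i, j)))).
  by move/le_lt_trans; apply; rewrite small //; lia.
- have : enorm (st_y s - st_y p) <= (1 * N)%:R * h.
    by apply: enorm_le_card => i j; rewrite ord1 !mxE; exact: (coord_close (inr (inr j))).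
  by move/le_lt_trans; apply; rewrite small //; lia.
Qed.

Lemma state_grid_fine s : admissible_time s ->
  exists L, good_level state_coord admissible_time near_equilibrium s L.
Proof.
move=> sT; have [a [del del_gt0 near_a]] := near_equilibrium_locally sT.
have K_gt0 : 0 < K by rewrite ltr0n.
have [L _ hL] := near_infty_natSinv_lt (PosNum (divr_gt0 del_gt0 K_gt0)).
have {}hL : L.+1%:R^-1 < del / K := hL L (leqnn L).
exists L, a => p pT ps; apply: near_a pT (grid_key_state_close _ ps).
by rewrite mulrC -ltr_pdivlMr.
Qed.

Hypothesis A_neq0 : forall i, A i !=set0.
Variables (Omega : pointedType) (B : R -> Omega -> 'rV[R]_d).
Variables (eta : R -> Omega -> 'rV[R]_N) (Z : R -> Omega -> 'M[R]_(N, d)).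
Hypothesis B_cont : forall w, {within `[0, T], continuous (fun s => B s w)}.
Hypotheses (Z_prog : prog B T Z) (eta_prog : prog B T eta).

Definition state_at t w := State t (B t w) (Z t w) (eta t w).

Lemma measurable_fun_state_coord t c : 0 <= t <= T ->
  measurable_fun (prog_dom B t) (fun p : prog_space B t => state_coord (state_at p.1 p.2) c).
Proof.
move=> tT; case: c => [[_|j]|[[i j]|i]] /=.
- exact: measurable_fun_time.
- exact: measurable_fun_path j B_cont tT.
- exact: (prog_real_measurable_fun _ _ _).1 (Z_prog i j) t tT.
- exact: (prog_real_measurable_fun _ _ _).1 (eta_prog 0 i) t tT.
Qed.

Lemma exists_progressive_near_equilibrium : exists alpha : R -> Omega -> Act R m,
  admissible B T A alpha /\
  forall t w, 0 <= t <= T -> near_equilibrium (state_at t w) (alpha t w).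
Proof.
pose a0 : Act R m := fun i => projT1 (cid (A_neq0 i)).
pose alpha t w := grid_select state_coord admissible_time near_equilibrium a0 (state_at t w).
have alphaP t w : 0 <= t <= T -> near_equilibrium (state_at t w) (alpha t w).
  by move=> tT; exact: (grid_selectP a0 state_grid_fine (s := state_at t w) tT).
exists alpha; split => // i; split; last by move=> t w tT; exact: (alphaP t w tT).1.1 i.
move=> i0 j; apply/prog_real_measurable_fun => t tT.
apply: (measurable_fun_grid_select a0 state_grid_fine
  (phi := fun p : prog_space B t => state_at p.1 p.2) _ _ _ (fun a : Act R m => a i i0 j)).
- exact: measurable_prog_dom.
- move=> [s w] /andP[s_ge0 st]; rewrite /admissible_time /= s_ge0 (le_trans st) //.
  by case/andP: tT.
- by move=> c; exact: measurable_fun_state_coord.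
Qed.

End NearEquilibriumSelection.

(** * Integral bounds *)

Section IntegralBounds.
Local Open Scope ereal_scope.
Variables (dX : measure_display) (X : measurableType dX) (R : realType).
Variable mu : {measure set X -> \bar R}.

(* Unlike [ge0_le_integral], no measurability is needed: every simple function below [f]
   is below [g]. *)
Lemma le_integral_ge0 (D : set X) (f g : X -> \bar R) :
  (forall x, D x -> 0 <= f x) -> (forall x, D x -> f x <= g x) ->
  \int[mu]_(x in D) f x <= \int[mu]_(x in D) g x.
Proof.
move=> f_ge0 fg.
have g_ge0 x : D x -> 0 <= g x by move=> Dx; exact: le_trans (f_ge0 x Dx) (fg x Dx).
rewrite (ge0_integralE mu f_ge0) (ge0_integralE mu g_ge0).
apply: ereal_sup_le => _ [h hf <-]; exists h => //= x.
apply: le_trans (hf x) _; rewrite /patch; case: ifP => // /[!inE] Dx.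
exact: fg.
Qed.

Lemma integral_le_cst (D : set X) (f : X -> R) (c : R) : measurable D ->
  (forall x, D x -> 0 <= f x <= c)%R -> \int[mu]_(x in D) (f x)%:E <= c%:E * mu D.
Proof.
move=> mD f_bd; rewrite -integral_cst //.
by apply: le_integral_ge0 => x /f_bd /andP[? ?]; rewrite lee_fin.
Qed.

End IntegralBounds.

Lemma EI_le_cst (R : realType) (dO : measure_display) (Omega : measurableType dO)
    (P : probability Omega R) (T c : R) (F : R -> Omega -> R) :
  0 < T -> (forall t w, 0 <= t <= T -> 0 <= F t w <= c) -> (EI P T F <= (c * T)%:E)%E.
Proof.
move=> T_gt0 F_bd; rewrite /EI.
have inner_le w : (\int[lebesgue_measure]_(t in interval0T T) (F t w)%:E <= (c * T)%:E)%E.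
  apply: le_trans (integral_le_cst _ _ _) _.
  - exact: measurable_itv.
  - by move=> t; rewrite /interval0T /= in_itv /=; exact: F_bd.
  by rewrite /interval0T /= (lebesgue_measure_itv `[0, T]) /= lte_fin T_gt0 oppr0 adde0 -EFinM.
apply: (le_trans (@le_integral_ge0 _ _ _ P setT _ (cst (c * T)%:E) _ _)).
- move=> w _; apply: integral_ge0 => t; rewrite /interval0T /= in_itv /= => /(F_bd _ w) /andP[? _].
  by rewrite lee_fin.
- by move=> w _; exact: inner_le.
by rewrite integral_cst // [X in (_ * X)%E](probability_setT P) mule1.
Qed.

Lemma exists_tolerance (R : realType) (eps T : R) : 0 < eps -> 0 <= T ->
  exists2 kap, 0 < kap & 4 * kap <= eps /\ (4 * kap) ^+ 2 * T <= eps.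
Proof.
move=> eps_gt0 T_ge0; have T1_gt0 : 0 < T + 1 by rewrite ltr_wpDl.
exists (Num.min (Num.min (eps / 4) 1) (eps / (16 * (T + 1)))).
  by rewrite !lt_min !divr_gt0 ?ltr01 ?mulr_gt0.
set kap := Num.min _ _.
have kap_ge0 : 0 <= kap by rewrite !le_min !divr_ge0 ?ler01 ?mulr_ge0 ?ltW.
have kap4 : kap <= eps / 4 by rewrite !ge_min lexx.
have kap1 : kap <= 1 by rewrite !ge_min lexx orbT.
have kapT : kap * (16 * (T + 1)) <= eps.
  by rewrite -ler_pdivlMr ?mulr_gt0 // ge_min lexx orbT.
split; first lra.
nra.
Qed.

Theorem proposition3p2 (R : realType) (d N : nat) (T : R)
  (d0 : measure_display) (Omega : measurableType d0) (P : probability Omega R)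
  (B : R -> Omega -> 'rV[R]_d)
  (m : 'I_N -> nat) (A : forall i : 'I_N, set 'rV[R]_(m i))
  (b : R -> 'rV[R]_d -> Act R m -> 'rV[R]_d)
  (f : R -> 'rV[R]_d -> Act R m -> 'rV[R]_N)
  (g : 'rV[R]_d -> 'rV[R]_N) :
  (0 < d)%N -> (0 < N)%N -> 0 < T ->
  is_std_BM P T B ->
  (forall i, is_domain (A i)) ->
  (* (i) *)
  bdd_unif_cont_data T A b -> bdd_unif_cont_data T A f -> bdd_unif_cont_term g ->
  (* (ii) *)
  (forall t x z, 0 <= t <= T -> Hset A b f t x z !=set0) ->
  (forall t x z, 0 <= t <= T -> forall e : R, 0 < e -> exists delta : R, 0 < delta /\
     forall t' x' z', 0 <= t' <= T ->
       `|t - t'| < delta -> enorm (x - x') < delta -> enorm (z - z') < delta ->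
       (hausdorff (Hset A b f t x z) (Hset A b f t' x' z') < e%:E)%E) ->
  forall (eta : R -> Omega -> 'rV[R]_N) (Z : R -> Omega -> 'M[R]_(N, d)) (eps : R),
    L2 P B T eta -> L2 P B T Z -> 0 < eps ->
    exists (alpha : R -> Omega -> Act R m) (Zeps : R -> Omega -> 'M[R]_(N, d)),
      admissible B T A alpha /\ L2 P B T Zeps /\
      (forall t w, 0 <= t <= T -> Eeps A b f eps t (B t w) (Zeps t w) (alpha t w)) /\
      (EI P T (fun t w => (enorm (Zeps t w - Z t w) ^+ 2)%R) <= eps%:E)%E /\
      (EI P T (fun t w =>
          (`| enorm (eta t w - ham b f t (B t w) (Z t w) (alpha t w))
             - dist_pt (eta t w) (Hset A b f t (B t w) (Z t w)) | ^+ 2)%R)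
         <= eps%:E)%E.
Proof.
move=> _ _ T_gt0 [_ [_ [B_cont _]]] A_dom hb hf _ H_neq0 H_cont eta Z eps
  [eta_prog _] Z_L2 eps_gt0.
have [kap kap_gt0 [kap_eps kap_T]] := exists_tolerance eps_gt0 (ltW T_gt0).
have eps2_gt0 : 0 < eps / 2 by rewrite divr_gt0.
have [alpha [alpha_adm alphaP]] := exists_progressive_near_equilibrium hb hf H_neq0 H_cont
  eps2_gt0 kap_gt0 (fun i => (A_dom i).1) B_cont Z_L2.1 eta_prog.
exists alpha, Z; split; first exact: alpha_adm.
split; first exact: Z_L2.
split; first by move=> t w tT; apply: le_Eeps (alphaP t w tT).1; lra.
split.
  apply: le_trans (@EI_le_cst _ _ _ P T 0 _ T_gt0 _) _; last by rewrite mul0r lee_fin ltW.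
  by move=> t w _; rewrite subrr enorm0 expr0n lexx.
apply: le_trans (@EI_le_cst _ _ _ P T ((4 * kap) ^+ 2) _ T_gt0 _) _; last by rewrite lee_fin.
move=> t w tT; rewrite sqr_ge0 lerXn2r ?nnegrE ?normr_ge0 ?mulr_ge0 ?(ltW kap_gt0) //.
exact: ltW (alphaP t w tT).2.
Qed.
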